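(* Let $\eta>0$ be fixed. For all $A\ge2$, $$ \sum_{n\ge 1}A^n\rho(n)\ll \exp\left(\frac{(1+\eta)A}{\log A}\right), $$ where the implied constant depends only on $\eta$.
   Context: $\rho$ denotes the Dickman--de Bruijn function: the continuous function on $[0,\infty)$ with $\rho(t)=1$ for $0\le t\le 1$ and $t\rho'(t)=-\rho(t-1)$ for $t>1$. The sum is over positive integers $n$. *)

From Stdlib Require Import Reals.
From Coquelicot Require Import Coquelicot.
Open Scope R_scope.

Definition is_dickman (rho : R -> R) : Prop :=
  (forall t, 0 <= t ->
     filterlim rho (within (fun x => 0 <= x) (locally t)) (locally (rho t))) /\
  (forall t, 0 <= t <= 1 -> rho t = 1) /\
  (forall t, 1 < t -> ex_derive rho t /\ t * Derive rho t = - rho (t - 1)).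

From Stdlib Require Import Reals Lra Lia.
From Coquelicot Require Import Coquelicot.
Open Scope R_scope.

(* Fix a grid size [m] and put [r k = rho (k / m)].  Since [rho] is nonincreasing and
   [u rho u = ∫_{u-1}^u rho], a left Riemann sum gives [k r_k <= r_{k-1} + ... + r_{k-m}].
   For [P z = Σ r_k z^k] and [Q z = Σ_{i<=m} z^i / i] this yields [z P' <= P z Q'], so
   [P e^{-Q}] decreases on [[0, oo)] and [rho n z^{nm} <= exp (Q z)].  Taking [z = e^s]
   with [e^{sm} ≈ A e^s], every term [A^n rho n] is at most [exp (Q (e^s)) e^{-sn}].
   Finally [Q (e^s) <= (1 + eta) A / log A + O_eta(1)] once [s] is small in terms of
   [eta]: the terms with [i >= (1 - d) m] add up to about [A / ((1 - d) log A)], the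
   others to [O (A^{1 - d/2})]. *)

Lemma exp_le_compat x y : x <= y -> exp x <= exp y.
Proof.
  intros [Hlt | ->]; [apply Rlt_le, exp_increasing, Hlt | apply Rle_refl].
Qed.

Lemma exp_pow_INR x n : exp x ^ n = exp (INR n * x).
Proof.
  induction n as [|n IH]; [simpl; rewrite Rmult_0_l, exp_0; reflexivity|].
  rewrite S_INR, <- tech_pow_Rmult, IH, <- exp_plus; f_equal; ring.
Qed.

Lemma sum_n_m_le_loc (a b : nat -> R) n m :
  (forall k, (n <= k <= m)%nat -> a k <= b k) -> sum_n_m a n m <= sum_n_m b n m.
Proof.
  induction m as [|m IH]; intros Hab.
  - destruct n; [rewrite !sum_n_n; apply Hab; lia|].
    rewrite !sum_n_m_zero by lia; apply Rle_refl.
  - destruct (Nat.le_gt_cases n (S m)) as [Hn | Hn].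
    + rewrite !sum_n_Sm by lia.
      apply Rplus_le_compat; [apply IH; intros; apply Hab|apply Hab]; lia.
    + rewrite !sum_n_m_zero by lia; apply Rle_refl.
Qed.

Lemma sum_n_m_ge0 (a : nat -> R) n m : (forall k, 0 <= a k) -> 0 <= sum_n_m a n m.
Proof.
  intros Ha; apply (Rle_trans _ (sum_n_m (fun _ => 0) n m)).
  - rewrite sum_n_m_const; lra.
  - apply sum_n_m_le, Ha.
Qed.

Lemma sum_n_le_mono (a : nat -> R) N N' :
  (forall k, 0 <= a k) -> (N <= N')%nat -> sum_n a N <= sum_n a N'.
Proof.
  intros Ha HN; unfold sum_n; rewrite (sum_n_m_Chasles a 0 N N') by lia.
  pose proof (sum_n_m_ge0 a (S N) N' Ha); unfold plus; simpl; lra.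
Qed.

Lemma sum_n_ge_last (a : nat -> R) N : (forall k, 0 <= a k) -> a N <= sum_n a N.
Proof.
  intros Ha; destruct N as [|N]; [rewrite sum_O; apply Rle_refl|].
  rewrite sum_Sn; pose proof (sum_n_le_mono a 0 N Ha (Nat.le_0_l N)) as Hsum.
  rewrite sum_O in Hsum; pose proof (Ha O); pose proof (Ha (S N)); unfold plus; simpl; lra.
Qed.

Lemma sum_n_sum_n_m_switch (u : nat -> nat -> R) N n m :
  sum_n (fun k => sum_n_m (u k) n m) N = sum_n_m (fun i => sum_n (fun k => u k i) N) n m.
Proof.
  induction N as [|N IH].
  - rewrite sum_O; apply sum_n_m_ext; intro i; rewrite sum_O; reflexivity.
  - rewrite sum_Sn, IH, <- sum_n_m_plus.
    apply sum_n_m_ext; intro i; rewrite sum_Sn; reflexivity.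
Qed.

Lemma is_derive_sum_n_m (f : nat -> R -> R) (df : nat -> R) n m x :
  (forall k, (n <= k <= m)%nat -> is_derive (f k) x (df k)) ->
  is_derive (fun y => sum_n_m (fun k => f k y) n m) x (sum_n_m df n m).
Proof.
  induction m as [|m IH]; intros Hf.
  - destruct n as [|n].
    + rewrite sum_n_n; apply (is_derive_ext (f O)); [intro; rewrite sum_n_n; reflexivity|].
      apply Hf; lia.
    + rewrite sum_n_m_zero by lia.
      apply (is_derive_ext (fun _ => 0)); [intro; rewrite sum_n_m_zero by lia; reflexivity|].
      exact (is_derive_const (V := R_NormedModule) 0 x).
  - destruct (Nat.le_gt_cases n (S m)) as [Hn | Hn].
    + rewrite sum_n_Sm by lia.
      apply (is_derive_ext (fun y => plus (sum_n_m (fun k => f k y) n m) (f (S m) y))).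
      { intro; rewrite sum_n_Sm by lia; reflexivity. }
      apply (is_derive_plus (fun y => sum_n_m (fun k => f k y) n m) (f (S m))).
      * apply IH; intros; apply Hf; lia.
      * apply Hf; lia.
    + rewrite sum_n_m_zero by lia.
      apply (is_derive_ext (fun _ => 0)); [intro; rewrite sum_n_m_zero by lia; reflexivity|].
      exact (is_derive_const (V := R_NormedModule) 0 x).
Qed.

Definition delay (r : nat -> R) (i k : nat) : R :=
  if (i <=? k)%nat then r (k - i)%nat else 0.

Lemma sum_delay_pow_below r i x N :
  (N < i)%nat -> sum_n (fun k => delay r i k * x ^ k) N = 0.
Proof.
  intros HN; rewrite (sum_n_ext_loc _ (fun _ => 0)).
  - rewrite sum_n_const; apply Rmult_0_r.
  - intros k Hk; unfold delay; destruct (Nat.leb_spec i k); [lia | apply Rmult_0_l].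
Qed.

Lemma sum_delay_pow r i x N :
  sum_n (fun k => delay r i k * x ^ k) (i + N) = x ^ i * sum_n (fun k => r k * x ^ k) N.
Proof.
  induction N as [|N IH].
  - rewrite Nat.add_0_r, sum_O; destruct i as [|i].
    + rewrite sum_O; unfold delay; simpl; ring.
    + rewrite sum_Sn, sum_delay_pow_below by lia.
      unfold delay; rewrite Nat.leb_refl, Nat.sub_diag; unfold plus; simpl; ring.
  - rewrite Nat.add_succ_r, !sum_Sn, IH; unfold delay.
    destruct (Nat.leb_spec i (S (i + N))); [|lia].
    replace (S (i + N) - i)%nat with (S N) by lia.
    replace (S (i + N)) with (i + S N)%nat by lia.
    rewrite pow_add; unfold plus; simpl; ring.
Qed.

Lemma sum_delay_pow_le r i x N :
  (forall k, 0 <= r k) -> 0 <= x ->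
  sum_n (fun k => delay r i k * x ^ k) N <= x ^ i * sum_n (fun k => r k * x ^ k) N.
Proof.
  intros Hr Hx.
  assert (Hterm : forall k, 0 <= r k * x ^ k) by (intro; apply Rmult_le_pos; [|apply pow_le]; auto).
  destruct (Nat.le_gt_cases i N) as [HiN | HiN].
  - replace N with (i + (N - i))%nat at 1 by lia; rewrite sum_delay_pow.
    apply Rmult_le_compat_l; [apply pow_le; auto|].
    apply sum_n_le_mono; [exact Hterm | lia].
  - rewrite sum_delay_pow_below by lia.
    apply Rmult_le_pos; [apply pow_le; auto | apply sum_n_m_ge0, Hterm].
Qed.

Definition log_series (m : nat) (x : R) : R := sum_n_m (fun i => x ^ i / INR i) 1 m.

Lemma is_derive_log_series m x :
  is_derive (log_series m) x (sum_n_m (fun i => x ^ pred i) 1 m).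
Proof.
  apply (is_derive_sum_n_m (fun i y => y ^ i / INR i)); intros k Hk.
  auto_derive; [auto|]. field; apply not_0_INR; lia.
Qed.

Lemma log_series_0 m : log_series m 0 = 0.
Proof.
  unfold log_series; rewrite (sum_n_m_ext_loc _ (fun _ => 0)).
  - rewrite sum_n_m_const; apply Rmult_0_r.
  - intros i Hi; rewrite pow_i by lia; apply Rmult_0_l.
Qed.

Lemma is_derive_power_sum (a : nat -> R) N y :
  is_derive (fun y => sum_n (fun k => a k * y ^ k) N) y
            (sum_n (fun k => a k * (INR k * y ^ pred k)) N).
Proof.
  apply (is_derive_sum_n (V := R_NormedModule) (fun k y => a k * y ^ k)); intros k _.
  auto_derive; [auto | ring].
Qed.

Lemma power_sum_0 (a : nat -> R) N : sum_n (fun k => a k * 0 ^ k) N = a O.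
Proof.
  unfold sum_n; rewrite sum_Sn_m by lia.
  rewrite (sum_n_m_ext_loc _ (fun _ => 0)), sum_n_m_const.
  - unfold plus; simpl; ring.
  - intros k Hk; rewrite pow_i by lia; apply Rmult_0_r.
Qed.

Section GeneratingFunction.

Variables (r : nat -> R) (m : nat).
Hypothesis r_ge0 : forall k, 0 <= r k.
Hypothesis r0_le1 : r O <= 1.
(* Discrete analogue of [u rho u = ∫_{u-1}^u rho]. *)
Hypothesis r_rec : forall k, INR k * r k <= sum_n_m (fun i => delay r i k) 1 m.

Lemma weighted_gf_le N x :
  0 <= x ->
  sum_n (fun k => INR k * r k * x ^ k) N
    <= sum_n (fun k => r k * x ^ k) N * sum_n_m (fun i => x ^ i) 1 m.
Proof.
  intros Hx.
  apply Rle_trans with (sum_n (fun k => sum_n_m (fun i => delay r i k * x ^ k) 1 m) N).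
  { apply sum_n_m_le; intro k.
    rewrite (sum_n_m_mult_r (K := R_Ring)).
    apply Rmult_le_compat_r; [apply pow_le, Hx | apply r_rec]. }
  rewrite sum_n_sum_n_m_switch, Rmult_comm, <- (sum_n_m_mult_r (K := R_Ring)).
  apply sum_n_m_le; intro i.
  eapply Rle_trans; [apply sum_delay_pow_le; assumption | right; reflexivity].
Qed.

Lemma derive_gf_le N y :
  0 < y ->
  sum_n (fun k => r k * (INR k * y ^ pred k)) N
    <= sum_n (fun k => r k * y ^ k) N * sum_n_m (fun i => y ^ pred i) 1 m.
Proof.
  intros Hy; apply (Rmult_le_reg_l y); [exact Hy|].
  assert (EP : y * sum_n (fun k => r k * (INR k * y ^ pred k)) N
               = sum_n (fun k => INR k * r k * y ^ k) N).
  { rewrite <- (sum_n_mult_l (K := R_Ring)).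
    apply sum_n_ext; intro k; destruct k; unfold mult; simpl; ring. }
  assert (EQ : y * sum_n_m (fun i => y ^ pred i) 1 m = sum_n_m (fun i => y ^ i) 1 m).
  { rewrite <- (sum_n_m_mult_l (K := R_Ring)).
    apply sum_n_m_ext_loc; intros i Hi; destruct i; [lia|]; unfold mult; simpl; ring. }
  rewrite EP, Rmult_comm, Rmult_assoc, (Rmult_comm _ y), EQ.
  apply weighted_gf_le, Rlt_le, Hy.
Qed.

Lemma gf_le_exp N x :
  0 <= x -> sum_n (fun k => r k * x ^ k) N <= exp (log_series m x).
Proof.
  intros Hx.
  set (P := fun y => sum_n (fun k => r k * y ^ k) N).
  set (dP := fun y => sum_n (fun k => r k * (INR k * y ^ pred k)) N).
  set (dQ := fun y => sum_n_m (fun i => y ^ pred i) 1 m).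
  set (G := fun y => P y * exp (- log_series m y)).
  set (dG := fun y => (dP y - P y * dQ y) * exp (- log_series m y)).
  assert (HdG : forall y, is_derive G y (dG y)).
  { intro y.
    assert (HE : is_derive (fun y => exp (- log_series m y)) y
                   (- dQ y * exp (- log_series m y))).
    { apply (is_derive_comp exp (fun y => - log_series m y)); [apply is_derive_exp|].
      apply (is_derive_opp (log_series m)), is_derive_log_series. }
    pose proof (is_derive_mult P _ y _ _ (is_derive_power_sum r N y) HE Rmult_comm) as D.
    unfold G, dG; replace ((dP y - P y * dQ y) * exp (- log_series m y))
      with (plus (mult (dP y) (exp (- log_series m y)))
                 (mult (P y) (- dQ y * exp (- log_series m y))))
      by (unfold plus, mult; simpl; ring).
    exact D. }
  assert (HG : G x <= G 0).
  { destruct (Req_dec x 0) as [-> | Hx0]; [apply Rle_refl|].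
    destruct (MVT_cor2 G dG 0 x) as [c [Ec Hc]]; [lra | intros; apply is_derive_Reals, HdG|].
    assert (dG c <= 0).
    { apply Rmult_le_0_r; [|apply Rlt_le, exp_pos].
      pose proof (derive_gf_le N c (proj1 Hc)); unfold dP, P, dQ; lra. }
    nra. }
  unfold G in HG; rewrite log_series_0, Ropp_0, exp_0, Rmult_1_r in HG.
  unfold P in HG; rewrite power_sum_0 in HG; fold (P x) in HG |- *.
  replace (P x) with (P x * exp (- log_series m x) * exp (log_series m x))
    by (rewrite Rmult_assoc, <- exp_plus, Rplus_opp_l, exp_0; ring).
  pose proof (exp_pos (log_series m x)); nra.
Qed.

End GeneratingFunction.

Lemma RInt_le_const (f : R -> R) a b c :
  a <= b -> ex_RInt f a b -> (forall x, a < x < b -> f x <= c) -> RInt f a b <= (b - a) * c.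
Proof.
  intros Hab Hf Hc; rewrite <- (RInt_const a b c : RInt (fun _ => c) a b = (b - a) * c).
  apply RInt_le; [exact Hab | exact Hf | apply ex_RInt_const | exact Hc].
Qed.

Lemma RInt_ge_const (f : R -> R) a b c :
  a <= b -> ex_RInt f a b -> (forall x, a < x < b -> c <= f x) -> (b - a) * c <= RInt f a b.
Proof.
  intros Hab Hf Hc; rewrite <- (RInt_const a b c : RInt (fun _ => c) a b = (b - a) * c).
  apply RInt_le; [exact Hab | apply ex_RInt_const | exact Hf | exact Hc].
Qed.

Lemma RInt_le_left_sum (f : R -> R) b h m :
  0 <= h ->
  (forall x y, ex_RInt f x y) ->
  (forall x y, b - INR m * h <= x <= y -> y <= b -> f y <= f x) ->
  RInt f (b - INR m * h) b <= h * sum_n_m (fun i => f (b - INR i * h)) 1 m.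
Proof.
  intros Hh Hint; induction m as [|m IH]; intros Hdecr.
  - rewrite sum_n_m_zero by lia; simpl.
    replace (b - 0 * h) with b by ring; rewrite RInt_point; unfold zero; simpl; lra.
  - pose proof (pos_INR m) as Hm.
    assert (Esum : sum_n_m (fun i => f (b - INR i * h)) 1 (S m)
                   = sum_n_m (fun i => f (b - INR i * h)) 1 m + f (b - INR (S m) * h))
      by (rewrite sum_n_Sm by lia; reflexivity).
    assert (Eint : RInt f (b - INR (S m) * h) b
                   = RInt f (b - INR (S m) * h) (b - INR m * h) + RInt f (b - INR m * h) b)
      by (symmetry; apply (RInt_Chasles (V := R_CompleteNormedModule)); apply Hint).
    rewrite Esum, Eint; rewrite S_INR in *.
    assert (Hpiece : RInt f (b - (INR m + 1) * h) (b - INR m * h)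
                     <= (b - INR m * h - (b - (INR m + 1) * h)) * f (b - (INR m + 1) * h)).
    { apply RInt_le_const; [nra | apply Hint |].
      intros x Hx; apply Hdecr; nra. }
    assert (IH' : RInt f (b - INR m * h) b <= h * sum_n_m (fun i => f (b - INR i * h)) 1 m).
    { apply IH; intros x y Hx Hy; apply Hdecr; nra. }
    nra.
Qed.

Section Dickman.

Variable rho : R -> R.
Hypothesis rho_dickman : is_dickman rho.

Lemma rho_eq_1 x : 0 <= x <= 1 -> rho x = 1.
Proof. apply (proj1 (proj2 rho_dickman)). Qed.

Lemma is_derive_rho x : 1 < x -> is_derive rho x (- rho (x - 1) / x).
Proof.
  intros Hx; destruct (proj2 (proj2 rho_dickman) x Hx) as [Hex Heq].
  replace (- rho (x - 1) / x) with (Derive rho x) by (rewrite <- Heq; field; lra).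
  apply Derive_correct, Hex.
Qed.

(* Extending [rho] by [1] to negative arguments makes it continuous on all of [R]. *)
Definition rho_ext (x : R) : R := rho (Rmax 0 x).

Lemma rho_ext_eq x : 0 <= x -> rho_ext x = rho x.
Proof. intros Hx; unfold rho_ext; rewrite Rmax_right by exact Hx; reflexivity. Qed.

Lemma continuous_rho_ext x : continuous rho_ext x.
Proof.
  apply (filterlim_comp _ _ _ (Rmax 0) rho _ (within (fun y => 0 <= y) (locally (Rmax 0 x)))).
  - intros P [eps HP]; exists eps; intros y Hy; apply HP; [|apply Rmax_l].
    change (Rabs (y - x) < eps) in Hy; change (Rabs (Rmax 0 y - Rmax 0 x) < eps).
    apply Rabs_def2 in Hy; apply Rabs_def1;
      unfold Rmax; destruct (Rle_dec 0 y), (Rle_dec 0 x); lra.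
  - apply (proj1 rho_dickman), Rmax_l.
Qed.

Lemma continuous_rho x : 0 < x -> continuous rho x.
Proof.
  intros Hx; apply (continuous_ext_loc _ rho_ext); [|apply continuous_rho_ext].
  exists (mkposreal x Hx); intros y Hy; change (Rabs (y - x) < x) in Hy.
  apply Rabs_def2 in Hy; apply rho_ext_eq; lra.
Qed.

Lemma ex_RInt_rho_ext a b : ex_RInt rho_ext a b.
Proof.
  apply (ex_RInt_continuous (V := R_CompleteNormedModule)); intros; apply continuous_rho_ext.
Qed.

Lemma is_derive_RInt_rho_ext_window x :
  is_derive (fun y => RInt rho_ext (y - 1) y) x (rho_ext x - rho_ext (x - 1)).
Proof.
  replace (rho_ext x - rho_ext (x - 1))
    with (minus (scal 1 (rho_ext x)) (scal 1 (rho_ext (x - 1))))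
    by (unfold minus, plus, opp, scal; simpl; unfold mult; simpl; ring).
  apply (is_derive_RInt_bound_comp (V := R_NormedModule) rho_ext (RInt rho_ext)
           (fun y => y - 1) (fun y => y)).
  - apply filter_forall; intros.
    apply (RInt_correct (V := R_CompleteNormedModule)), ex_RInt_rho_ext.
  - apply continuous_rho_ext.
  - apply continuous_rho_ext.
  - auto_derive; [auto | ring].
  - auto_derive; auto.
Qed.

Lemma rho_eq_RInt t : 1 <= t -> t * rho t = RInt rho_ext (t - 1) t.
Proof.
  intros Ht.
  set (Phi := fun x => x * rho_ext x - RInt rho_ext (x - 1) x).
  assert (HPhi : forall x, 1 < x -> is_derive Phi x 0).
  { intros x Hx.
    assert (Hloc : locally x (fun y => rho y = rho_ext y)).
    { exists (mkposreal (x - 1) ltac:(lra)); intros y Hy; change (Rabs (y - x) < x - 1) in Hy.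
      apply Rabs_def2 in Hy; symmetry; apply rho_ext_eq; lra. }
    assert (Hm : is_derive (fun y => y * rho_ext y) x (rho_ext x - rho (x - 1))).
    { replace (rho_ext x - rho (x - 1))
        with (plus (mult one (rho_ext x)) (mult x (- rho (x - 1) / x)))
        by (unfold plus, mult, one; simpl; field; lra).
      apply (is_derive_mult (fun y => y) rho_ext);
        [apply (is_derive_id (K := R_AbsRing)) | | apply Rmult_comm].
      apply (is_derive_ext_loc rho), is_derive_rho; assumption. }
    replace 0 with (minus (rho_ext x - rho (x - 1)) (rho_ext x - rho_ext (x - 1))).
    - apply (is_derive_minus (fun y => y * rho_ext y));
        [exact Hm | apply is_derive_RInt_rho_ext_window].
    - rewrite (rho_ext_eq (x - 1)) by lra; unfold minus, plus, opp; simpl; ring. }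
  assert (Hcont : forall x, continuity_pt Phi x).
  { intro x; apply continuity_pt_filterlim.
    apply (continuous_minus (fun y => y * rho_ext y)).
    - apply (continuous_mult (K := R_AbsRing) (fun y => y) rho_ext);
        [apply continuous_id | apply continuous_rho_ext].
    - apply (ex_derive_continuous (fun y => RInt rho_ext (y - 1) y)).
      eexists; apply is_derive_RInt_rho_ext_window. }
  assert (HPhi1 : Phi 1 = 0).
  { unfold Phi; replace (1 - 1) with 0 by ring.
    rewrite (RInt_ext rho_ext (fun _ => 1)), RInt_const.
    - rewrite rho_ext_eq, rho_eq_1 by lra; unfold scal; simpl; unfold mult; simpl; ring.
    - intros y Hy; rewrite Rmin_left, Rmax_right in Hy by lra.
      rewrite rho_ext_eq, rho_eq_1 by lra; reflexivity. }
  destruct (MVT_gen Phi 1 t (fun _ => 0)) as [c [_ Ec]].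
  - rewrite Rmin_left, Rmax_right by lra; intros; apply HPhi; lra.
  - intros; apply Hcont.
  - unfold Phi in Ec, HPhi1; rewrite rho_ext_eq in Ec by lra; lra.
Qed.

Lemma rho_nonincreasing_upto (n : nat) :
  (forall x, 0 <= x <= INR n -> 0 <= rho x) ->
  forall x y, 0 <= x <= y -> y <= INR n + 1 -> rho y <= rho x.
Proof.
  intros Hpos x y Hxy Hy.
  destruct (Rle_dec y 1) as [Hy1 | Hy1]; [rewrite !rho_eq_1 by lra; lra|].
  set (x1 := Rmax 1 x).
  assert (Hx1 : rho x1 = rho x).
  { unfold x1, Rmax; destruct (Rle_dec 1 x); [reflexivity|].
    rewrite !rho_eq_1 by lra; reflexivity. }
  assert (Hx1y : 1 <= x1 <= y) by (unfold x1; split; [apply Rmax_l | apply Rmax_lub; lra]).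
  rewrite <- Hx1.
  destruct (MVT_gen rho x1 y (fun c => - rho (c - 1) / c)) as [c [Hc Ec]].
  - rewrite Rmin_left, Rmax_right by lra; intros c Hc; apply is_derive_rho; lra.
  - rewrite Rmin_left, Rmax_right by lra; intros c Hc.
    apply continuity_pt_filterlim, continuous_rho; lra.
  - rewrite Rmin_left, Rmax_right in Hc by lra.
    assert (0 <= rho (c - 1) / c) by (apply Rdiv_le_0_compat; [apply Hpos |]; lra).
    unfold Rdiv in *; rewrite Ropp_mult_distr_l_reverse in Ec; nra.
Qed.

Lemma rho_nonneg_upto (n : nat) : forall x, 0 <= x <= INR n -> 0 <= rho x.
Proof.
  induction n as [|n IH]; intros t Ht.
  - simpl in Ht; rewrite rho_eq_1 by lra; lra.
  - rewrite S_INR in Ht.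
    destruct (Rle_dec t 1) as [Ht1 | Ht1]; [rewrite rho_eq_1 by lra; lra|].
    assert (Hint : (t - (t - 1)) * rho t <= RInt rho_ext (t - 1) t).
    { apply RInt_ge_const; [lra | apply ex_RInt_rho_ext |].
      intros x Hx; rewrite rho_ext_eq by lra.
      apply (rho_nonincreasing_upto n IH); lra. }
    (* [t rho t = ∫_{t-1}^t rho >= rho t], hence [(t - 1) rho t >= 0]. *)
    rewrite <- rho_eq_RInt in Hint by lra; nra.
Qed.

Lemma rho_nonneg x : 0 <= x -> 0 <= rho x.
Proof.
  intros Hx; destruct (nfloor_ex x Hx) as [n Hn].
  apply (rho_nonneg_upto (S n)); rewrite S_INR; lra.
Qed.

Lemma rho_nonincreasing x y : 0 <= x <= y -> rho y <= rho x.
Proof.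
  intros Hxy; assert (Hy : 0 <= y) by lra; destruct (nfloor_ex y Hy) as [n Hn].
  apply (rho_nonincreasing_upto n); [intros; apply rho_nonneg|..]; lra.
Qed.

Lemma rho_ext_nonincreasing x y : x <= y -> rho_ext y <= rho_ext x.
Proof.
  intros Hxy; apply rho_nonincreasing; split; [apply Rmax_l | apply Rmax_le_compat; lra].
Qed.

Lemma rho_grid_le_prev_sum (m k : nat) :
  (0 < m)%nat -> (m <= k)%nat ->
  INR k * rho (INR k / INR m) <= sum_n_m (fun i => rho (INR (k - i) / INR m)) 1 m.
Proof.
  intros Hm Hk.
  assert (HmR : 0 < INR m) by (apply lt_0_INR; lia).
  set (u := INR k / INR m).
  assert (Hu : 1 <= u).
  { unfold u; replace 1 with (INR m / INR m) by (field; lra).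
    apply Rmult_le_compat_r; [apply Rlt_le, Rinv_0_lt_compat, HmR | apply le_INR, Hk]. }
  assert (Hsum := RInt_le_left_sum rho_ext u (/ INR m) m
                    (Rlt_le _ _ (Rinv_0_lt_compat _ HmR)) ex_RInt_rho_ext
                    (fun x y Hxy _ => rho_ext_nonincreasing x y (proj2 Hxy))).
  replace (u - INR m * / INR m) with (u - 1) in Hsum by (field; lra).
  rewrite <- rho_eq_RInt in Hsum by exact Hu.
  rewrite (sum_n_m_ext_loc _ (fun i => rho (INR (k - i) / INR m))) in Hsum.
  - apply (Rmult_le_compat_l (INR m)) in Hsum; [|lra].
    replace (INR k * rho u) with (INR m * (u * rho u)) by (unfold u; field; lra).
    replace (sum_n_m _ 1 m)
      with (INR m * (/ INR m * sum_n_m (fun i => rho (INR (k - i) / INR m)) 1 m))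
      by (field; lra).
    exact Hsum.
  - intros i Hi.
    replace (u - INR i * / INR m) with (INR (k - i) / INR m)
      by (unfold u; rewrite minus_INR by lia; field; lra).
    apply rho_ext_eq, Rdiv_le_0_compat; [apply pos_INR | exact HmR].
Qed.

Lemma rho_grid_le_delay_sum (m : nat) :
  (0 < m)%nat ->
  forall k, INR k * rho (INR k / INR m)
              <= sum_n_m (fun i => delay (fun j => rho (INR j / INR m)) i k) 1 m.
Proof.
  intros Hm k.
  assert (HmR : 0 < INR m) by (apply lt_0_INR; lia).
  assert (Hgrid0 : forall j, 0 <= INR j / INR m)
    by (intro; apply Rdiv_le_0_compat; [apply pos_INR | exact HmR]).
  destruct (Nat.le_gt_cases m k) as [Hk | Hk].
  - rewrite (sum_n_m_ext_loc _ (fun i => rho (INR (k - i) / INR m)));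
      [apply rho_grid_le_prev_sum; assumption|].
    intros i Hi; unfold delay; destruct (Nat.leb_spec i k); [reflexivity | lia].
  - assert (Hgrid1 : forall j, (j <= m)%nat -> rho (INR j / INR m) = 1).
    { intros j Hj; apply rho_eq_1; split; [apply Hgrid0|].
      replace 1 with (INR m / INR m) by (field; lra).
      apply Rmult_le_compat_r; [apply Rlt_le, Rinv_0_lt_compat, HmR | apply le_INR, Hj]. }
    rewrite Hgrid1 by lia.
    rewrite (sum_n_m_Chasles _ 1 k m) by lia.
    rewrite (sum_n_m_ext_loc _ (fun _ => 1) 1 k), sum_n_m_const.
    + replace (S k - 1)%nat with k by lia.
      assert (0 <= sum_n_m (fun i => delay (fun j => rho (INR j / INR m)) i k) (S k) m).
      { apply sum_n_m_ge0; intro i; unfold delay.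
        destruct (i <=? k)%nat; [apply rho_nonneg, Hgrid0 | lra]. }
      unfold plus; simpl; lra.
    + intros i Hi; unfold delay; destruct (Nat.leb_spec i k); [apply Hgrid1 | ]; lia.
Qed.

Lemma rho_nat_pow_le (m n : nat) (x : R) :
  (0 < m)%nat -> 0 <= x -> rho (INR n) * x ^ (n * m) <= exp (log_series m x).
Proof.
  intros Hm Hx.
  assert (HmR : 0 < INR m) by (apply lt_0_INR; lia).
  set (r := fun j => rho (INR j / INR m)).
  assert (Hr : forall j, 0 <= r j)
    by (intro; apply rho_nonneg, Rdiv_le_0_compat; [apply pos_INR | exact HmR]).
  replace (rho (INR n)) with (r (n * m)%nat) by (unfold r; f_equal; rewrite mult_INR; field; lra).
  eapply Rle_trans; [apply (sum_n_ge_last (fun k => r k * x ^ k)) | apply gf_le_exp].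
  - intro; apply Rmult_le_pos; [apply Hr | apply pow_le, Hx].
  - exact Hr.
  - unfold r; simpl; rewrite Rdiv_0_l, rho_eq_1; lra.
  - apply rho_grid_le_delay_sum, Hm.
  - exact Hx.
Qed.

End Dickman.

Lemma series_le_geom (a : nat -> R) (B q : R) :
  0 < q < 1 -> (forall n, 0 <= a n <= B * q ^ S n) ->
  ex_series a /\ Series a <= B * q / (1 - q).
Proof.
  intros Hq Ha.
  change (B * q / (1 - q)) with (scal (B * q) (/ (1 - q))).
  assert (Hgeom : is_series (fun n => B * q ^ S n) (scal (B * q) (/ (1 - q)))).
  { apply (is_series_ext (fun n => scal (B * q) (q ^ n))).
    - intro n; unfold scal; simpl; unfold mult; simpl; ring.
    - apply (is_series_scal (K := R_AbsRing) (V := R_NormedModule)), is_series_geom.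
      rewrite Rabs_pos_eq; lra. }
  assert (Hex : ex_series a).
  { apply (ex_series_le a (fun n => B * q ^ S n)); [|eexists; exact Hgeom].
    intro n; change (norm (a n)) with (Rabs (a n)); rewrite Rabs_pos_eq; apply Ha. }
  split; [exact Hex|].
  rewrite <- (is_series_unique _ _ Hgeom).
  apply Series_le; [exact Ha | eexists; exact Hgeom].
Qed.

Lemma dickman_series_le rho (A s : R) (m : nat) :
  is_dickman rho -> 0 < s -> (0 < m)%nat -> 0 <= A -> A * exp s <= exp s ^ m ->
  ex_series (fun n => A ^ S n * rho (INR (S n))) /\
  Series (fun n => A ^ S n * rho (INR (S n))) <= exp (log_series m (exp s)) / (exp s - 1).
Proof.
  intros Hrho Hs Hm HA HAm.
  assert (Hes : 1 < exp s) by (rewrite <- exp_0; apply exp_increasing, Hs).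
  replace (exp (log_series m (exp s)) / (exp s - 1))
    with (exp (log_series m (exp s)) * / exp s / (1 - / exp s))
    by (field; split; lra).
  apply series_le_geom.
  - split; [apply Rinv_0_lt_compat; lra|].
    rewrite <- Rinv_1; apply Rinv_lt_contravar; lra.
  - intro n; split.
    + apply Rmult_le_pos; [apply pow_le, HA | apply (rho_nonneg rho Hrho), pos_INR].
    + assert (Hes_n : 0 < exp s ^ S n) by (apply pow_lt; lra).
      assert (Hscale : A ^ S n * exp s ^ S n <= (exp s ^ m) ^ S n).
      { rewrite <- Rpow_mult_distr; apply pow_incr; split; [|exact HAm].
        apply Rmult_le_pos; lra. }
      pose proof (rho_nat_pow_le rho Hrho m (S n) (exp s) Hm (Rlt_le _ _ (exp_pos s))) as Hrho_n.
      rewrite Nat.mul_comm, pow_mult in Hrho_n.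
      pose proof (rho_nonneg rho Hrho (INR (S n)) (pos_INR _)).
      rewrite pow_inv; apply (Rmult_le_reg_r (exp s ^ S n)); [exact Hes_n|].
      replace (exp (log_series m (exp s)) * / exp s ^ S n * exp s ^ S n)
        with (exp (log_series m (exp s))) by (field; lra).
      nra.
Qed.

Lemma geometric_sum_le q m : 1 < q -> sum_n_m (fun i => q ^ i) 1 m <= q ^ S m / (q - 1).
Proof.
  intros Hq; induction m as [|m IH].
  - rewrite sum_n_m_zero by lia; apply Rdiv_le_0_compat; [apply pow_le|]; lra.
  - rewrite sum_n_Sm by lia.
    replace (q ^ S (S m) / (q - 1)) with (q ^ S m / (q - 1) + q ^ S m) by (simpl; field; lra).
    apply Rplus_le_compat_r, IH.
Qed.

Lemma exp_pow_div_le_split (s c : R) (i : nat) :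
  0 < s -> 0 < c -> (0 < i)%nat ->
  exp s ^ i / INR i <= exp s ^ i / c + exp (s * c / 2) * exp (s / 2) ^ i.
Proof.
  intros Hs Hc Hi; rewrite !exp_pow_INR.
  assert (HiR : 1 <= INR i) by (apply (le_INR 1); lia).
  pose proof (exp_pos (INR i * s)); pose proof (exp_pos (s * c / 2 + INR i * (s / 2))).
  rewrite <- exp_plus.
  destruct (Rle_dec c (INR i)) as [Hci | Hci].
  - assert (exp (INR i * s) / INR i <= exp (INR i * s) / c); [|lra].
    apply Rmult_le_compat_l; [lra | apply Rinv_le_contravar; lra].
  - assert (exp (INR i * s) / INR i <= exp (INR i * s)).
    { unfold Rdiv; rewrite <- (Rmult_1_r (exp (INR i * s))) at 2.
      apply Rmult_le_compat_l; [lra|]; rewrite <- Rinv_1; apply Rinv_le_contravar; lra. }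
    assert (exp (INR i * s) <= exp (s * c / 2 + INR i * (s / 2))) by (apply exp_le_compat; nra).
    assert (0 <= exp (INR i * s) / c) by (apply Rdiv_le_0_compat; lra).
    lra.
Qed.

Lemma log_series_exp_le s c m :
  0 < s -> 0 < c ->
  log_series m (exp s)
    <= exp s ^ S m / (c * (exp s - 1)) + exp (s * c / 2) * (exp (s / 2) ^ S m / (exp (s / 2) - 1)).
Proof.
  intros Hs Hc.
  assert (Hes : 1 < exp s) by (rewrite <- exp_0; apply exp_increasing, Hs).
  assert (Hes2 : 1 < exp (s / 2)) by (rewrite <- exp_0; apply exp_increasing; lra).
  eapply Rle_trans.
  { apply (sum_n_m_le_loc _ (fun i => exp s ^ i / c + exp (s * c / 2) * exp (s / 2) ^ i)).
    intros i Hi; apply exp_pow_div_le_split; [exact Hs | exact Hc | lia]. }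
  assert (E0 : sum_n_m (fun i => exp s ^ i / c + exp (s * c / 2) * exp (s / 2) ^ i) 1 m
               = sum_n_m (fun i => exp s ^ i / c) 1 m
                 + sum_n_m (fun i => exp (s * c / 2) * exp (s / 2) ^ i) 1 m)
    by exact (sum_n_m_plus (G := R_AbelianMonoid) _ _ 1 m).
  assert (E1 : sum_n_m (fun i => exp s ^ i / c) 1 m = sum_n_m (fun i => exp s ^ i) 1 m / c)
    by exact (sum_n_m_mult_r (K := R_Ring) (/ c) _ 1 m).
  assert (E2 : sum_n_m (fun i => exp (s * c / 2) * exp (s / 2) ^ i) 1 m
               = exp (s * c / 2) * sum_n_m (fun i => exp (s / 2) ^ i) 1 m)
    by exact (sum_n_m_mult_l (K := R_Ring) _ _ 1 m).
  rewrite E0, E1, E2.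
  apply Rplus_le_compat.
  - replace (exp s ^ S m / (c * (exp s - 1))) with (exp s ^ S m / (exp s - 1) / c)
      by (field; lra).
    apply Rmult_le_compat_r; [apply Rlt_le, Rinv_0_lt_compat, Hc | apply geometric_sum_le, Hes].
  - apply Rmult_le_compat_l; [apply Rlt_le, exp_pos | apply geometric_sum_le, Hes2].
Qed.

Lemma exp_sublinear_le (c delta eps L : R) :
  0 < c -> 0 < delta -> 0 < eps -> 0 < L ->
  c * exp ((1 - delta) * L) <= eps * exp L / L + c * exp (4 * c / (delta ^ 2 * eps)).
Proof.
  intros Hc Hd He HL.
  assert (Hfirst : 0 <= eps * exp L / L)
    by (apply Rdiv_le_0_compat; [apply Rmult_le_pos; [lra | apply Rlt_le, exp_pos] | lra]).
  (* Beyond [L = 4 c / (delta^2 eps)], [e^{delta L} >= (delta L)^2 / 4] beats [c L / eps]. *)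
  destruct (Rle_dec L (4 * c / (delta ^ 2 * eps))) as [HL0 | HL0].
  - assert (c * exp ((1 - delta) * L) <= c * exp (4 * c / (delta ^ 2 * eps))); [|lra].
    apply Rmult_le_compat_l; [lra | apply exp_le_compat; nra].
  - set (X := exp (delta * L)).
    assert (HX : delta ^ 2 * L ^ 2 / 4 <= X).
    { unfold X; replace (delta * L) with (delta * L / 2 + delta * L / 2) by field.
      rewrite exp_plus; pose proof (exp_ineq1_le (delta * L / 2)).
      assert (0 < delta * L) by nra; nra. }
    assert (HL1 : 4 * c <= delta ^ 2 * eps * L).
    { apply Rnot_le_lt in HL0.
      apply (Rmult_lt_compat_r (delta ^ 2 * eps)) in HL0;
        [|apply Rmult_lt_0_compat; [apply pow_lt|]; lra].
      replace (4 * c / (delta ^ 2 * eps) * (delta ^ 2 * eps)) with (4 * c) in HL0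
        by (field; repeat split; try lra; apply pow_nonzero; lra).
      lra. }
    assert (Key : c * L <= eps * X) by nra.
    assert (HXpos : 0 < X) by apply exp_pos.
    pose proof (exp_pos (delta * L)).
    replace (c * exp ((1 - delta) * L)) with (c * L * exp L / (X * L))
      by (unfold X; replace ((1 - delta) * L) with (L + - (delta * L)) by ring;
          rewrite exp_plus, exp_Ropp; field; split; lra).
    replace (eps * exp L / L) with (eps * X * exp L / (X * L)) by (field; split; lra).
    assert (0 < c * exp (4 * c / (delta ^ 2 * eps)))
      by (apply Rmult_lt_0_compat; [|apply exp_pos]; lra).
    assert (c * L * exp L / (X * L) <= eps * X * exp L / (X * L)); [|lra].
    unfold Rdiv; apply Rmult_le_compat_r; [apply Rlt_le, Rinv_0_lt_compat; nra|].
    apply Rmult_le_compat_r; [apply Rlt_le, exp_pos | exact Key].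
Qed.

Lemma exists_nat_scale (s L : R) :
  0 < s -> 0 <= L -> exists m : nat, (0 < m)%nat /\ L + s <= s * INR m <= L + 2 * s.
Proof.
  intros Hs HL.
  destruct (nfloor_ex (L / s) (Rdiv_le_0_compat _ _ HL Hs)) as [n [Hn1 Hn2]].
  exists (S (S n)); split; [lia|].
  apply (Rmult_le_compat_l s) in Hn1; [|lra]; apply (Rmult_lt_compat_l s) in Hn2; [|lra].
  replace (s * (L / s)) with L in Hn1, Hn2 by (field; lra).
  rewrite !S_INR; split; nra.
Qed.

Lemma log_series_at_scale_le (d s L : R) (m : nat) :
  0 < d < 1 -> 0 < s -> 0 < L -> L + s <= s * INR m <= L + 2 * s ->
  log_series m (exp s)
    <= exp (3 * s) / (1 - d) * (exp L / L)
       + exp (5 * s / 2) / (exp (s / 2) - 1) * exp ((1 - d / 2) * L).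
Proof.
  intros Hd Hs HL Hm.
  assert (HmR : 0 < INR m) by nra.
  assert (Hes : s <= exp s - 1) by (pose proof (exp_ineq1_le s); lra).
  assert (Hes2 : 0 < exp (s / 2) - 1)
    by (pose proof (exp_ineq1 (s / 2) ltac:(lra)); lra).
  eapply Rle_trans; [apply (log_series_exp_le s ((1 - d) * INR m)); [exact Hs | nra]|].
  rewrite !exp_pow_INR, S_INR; apply Rplus_le_compat.
  - replace (exp (3 * s) / (1 - d) * (exp L / L)) with (exp (L + 3 * s) / ((1 - d) * L))
      by (rewrite exp_plus; field; lra).
    assert (Hc : 0 < (1 - d) * INR m) by nra.
    unfold Rdiv; apply Rmult_le_compat.
    + apply Rlt_le, exp_pos.
    + apply Rlt_le, Rinv_0_lt_compat, Rmult_lt_0_compat; lra.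
    + apply exp_le_compat; nra.
    + apply Rinv_le_contravar; [nra|].
      rewrite Rmult_assoc; apply Rmult_le_compat_l; nra.
  - replace (exp (s * ((1 - d) * INR m) / 2) * (exp ((INR m + 1) * (s / 2)) / (exp (s / 2) - 1)))
      with (exp (s * ((1 - d) * INR m) / 2 + (INR m + 1) * (s / 2)) / (exp (s / 2) - 1))
      by (rewrite exp_plus; unfold Rdiv; ring).
    replace (exp (5 * s / 2) / (exp (s / 2) - 1) * exp ((1 - d / 2) * L))
      with (exp (5 * s / 2 + (1 - d / 2) * L) / (exp (s / 2) - 1))
      by (rewrite exp_plus; unfold Rdiv; ring).
    apply Rmult_le_compat_r; [apply Rlt_le, Rinv_0_lt_compat, Hes2|].
    apply exp_le_compat; nra.
Qed.

Lemma log_series_exp_le_eta (eta s : R) :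
  0 < eta <= 1 -> 0 < s -> exp (3 * s) = 1 + eta / 8 ->
  exists K : R, forall (L : R) (m : nat),
    0 < L -> L + s <= s * INR m <= L + 2 * s ->
    log_series m (exp s) <= (1 + eta) * exp L / L + K.
Proof.
  intros Heta Hs E3s.
  set (d := eta / 8).
  set (c := exp (5 * s / 2) / (exp (s / 2) - 1)).
  assert (Hc : 0 < c).
  { apply Rdiv_lt_0_compat; [apply exp_pos|].
    pose proof (exp_ineq1 (s / 2) ltac:(lra)); lra. }
  exists (c * exp (4 * c / ((d / 2) ^ 2 * (4 * d)))); intros L m HL Hm.
  eapply Rle_trans; [apply (log_series_at_scale_le d s L m); try assumption; unfold d; lra|].
  pose proof (exp_sublinear_le c (d / 2) (4 * d) L Hc ltac:(unfold d; lra)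
                ltac:(unfold d; lra) HL) as Hsub.
  fold c; rewrite E3s; fold d.
  (* [d = eta / 8 <= 1 / 8] gives [(1 + d) / (1 - d) + 4 d <= 1 + 8 d = 1 + eta]. *)
  assert (Hratio : (1 + d) / (1 - d) <= 1 + 4 * d).
  { apply (Rmult_le_reg_r (1 - d)); [unfold d; lra|].
    unfold Rdiv; rewrite Rmult_assoc, Rinv_l by (unfold d; lra); unfold d; nra. }
  assert (HAL : 0 < exp L / L) by (apply Rdiv_lt_0_compat; [apply exp_pos | lra]).
  replace ((1 + eta) * exp L / L) with ((1 + 4 * d) * (exp L / L) + 4 * d * exp L / L)
    by (unfold d; field; lra).
  nra.
Qed.

Lemma dickman_series_bound_eta_le_1 (eta : R) :
  0 < eta <= 1 ->
  exists C : R, 0 < C /\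
  forall rho : R -> R, is_dickman rho ->
  forall A : R, 2 <= A ->
    ex_series (fun n : nat => A ^ (S n) * rho (INR (S n))) /\
    Series (fun n : nat => A ^ (S n) * rho (INR (S n)))
      <= C * exp ((1 + eta) * A / ln A).
Proof.
  intros Heta.
  set (s := ln (1 + eta / 8) / 3).
  assert (Hs : 0 < s).
  { unfold s; assert (0 < ln (1 + eta / 8)); [|lra].
    rewrite <- ln_1; apply ln_increasing; lra. }
  assert (E3s : exp (3 * s) = 1 + eta / 8).
  { unfold s; replace (3 * (ln (1 + eta / 8) / 3)) with (ln (1 + eta / 8)) by field.
    apply exp_ln; lra. }
  assert (Hes : 1 < exp s) by (rewrite <- exp_0; apply exp_increasing, Hs).
  destruct (log_series_exp_le_eta eta s Heta Hs E3s) as [K HK].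
  exists (exp K / (exp s - 1)); split; [apply Rdiv_lt_0_compat; [apply exp_pos | lra]|].
  intros rho Hrho A HA.
  assert (HL : 0 < ln A) by (rewrite <- ln_1; apply ln_increasing; lra).
  assert (EL : exp (ln A) = A) by (apply exp_ln; lra).
  destruct (exists_nat_scale s (ln A) Hs (Rlt_le _ _ HL)) as [m [Hm HsM]].
  assert (HAm : A * exp s <= exp s ^ m).
  { rewrite exp_pow_INR, <- EL at 1; rewrite <- exp_plus; apply exp_le_compat; lra. }
  destruct (dickman_series_le rho A s m Hrho Hs Hm ltac:(lra) HAm) as [Hex Hle].
  split; [exact Hex|].
  eapply Rle_trans; [exact Hle|].
  replace (exp K / (exp s - 1) * exp ((1 + eta) * A / ln A))
    with (exp ((1 + eta) * A / ln A + K) / (exp s - 1)) by (rewrite exp_plus; field; lra).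
  apply Rmult_le_compat_r; [apply Rlt_le, Rinv_0_lt_compat; lra|].
  pose proof (HK (ln A) m HL HsM) as HQ; rewrite EL in HQ.
  apply exp_le_compat, HQ.
Qed.

Theorem lemma2p1 :
  forall eta : R, 0 < eta ->
  exists C : R, 0 < C /\
  forall rho : R -> R, is_dickman rho ->
  forall A : R, 2 <= A ->
    ex_series (fun n : nat => A ^ (S n) * rho (INR (S n))) /\
    Series (fun n : nat => A ^ (S n) * rho (INR (S n)))
      <= C * exp ((1 + eta) * A / ln A).
Proof.
  intros eta Heta.
  destruct (dickman_series_bound_eta_le_1 (Rmin eta 1)) as [C [HC Hbound]].
  { split; [apply Rmin_pos; lra | apply Rmin_r]. }
  exists C; split; [exact HC|].
  intros rho Hrho A HA; destruct (Hbound rho Hrho A HA) as [Hex Hle]; split; [exact Hex|].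
  eapply Rle_trans; [exact Hle|].
  apply Rmult_le_compat_l; [lra | apply exp_le_compat].
  assert (HlnA : 0 < ln A) by (rewrite <- ln_1; apply ln_increasing; lra).
  pose proof (Rmin_l eta 1).
  unfold Rdiv; apply Rmult_le_compat_r; [apply Rlt_le, Rinv_0_lt_compat, HlnA|].
  apply Rmult_le_compat_r; lra.
Qed.
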